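(* Let $n\ge 1$, $\sigma>0$, $\lambda>0$, covariates $X=(X_1,\dots,X_n)\in[0,1]^n$ and responses $\mathbf y\in\mathbb R^n$ be given. Let $K:[0,1]^2\to\mathbb R$ be a continuous, symmetric, positive definite kernel with $K\in C^2([0,1]\times[0,1])$, and suppose $\widehat\sigma^2_{f'}(x)>0$ for every $x\in[0,1]$. Then there is a constant $C$ not depending on $t$ such that for all $t\in[0,1]$, $$\ell(t)=C\,\frac{1}{\sqrt{\widehat\sigma^2_{f'}(t)/K_{11}(t,t)}}\exp\Big\{-\frac{\widehat\mu_{f'}(t)^2}{2\widehat\sigma^2_{f'}(t)}\Big\}.$$ Consequently, for a prior density $\pi(t)$ on $[0,1]$, the posterior density of $t$ satisfies $$\pi_n(t\mid X,\mathbf y)\propto \frac{1}{\sqrt{\widehat\sigma^2_{f'}(t)/K_{11}(t,t)}}\exp\Big(-\frac{\widehat\mu_{f'}(t)^2}{2\widehat\sigma^2_{f'}(t)}\Big)\pi(t).$$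
   Context: Notation: $K_{jl}(x,x')=\partial^{j+l}K(x,x')/\partial x^j\partial x'^l$; $K(X,X)=(K(X_i,X_j))_{i,j=1}^n$; $K_{10}(x,X)=(K_{10}(x,X_1),\dots,K_{10}(x,X_n))$ (row vector) and $K_{01}(X,x)=K_{10}(x,X)^T$; $I_n$ is the $n\times n$ identity. Define $\widehat\mu_{f'}(x)=K_{10}(x,X)[K(X,X)+n\lambda I_n]^{-1}\mathbf y$ and $\widehat\sigma^2_{f'}(x)=\sigma^2(n\lambda)^{-1}\{K_{11}(x,x)-K_{10}(x,X)[K(X,X)+n\lambda I_n]^{-1}K_{01}(X,x)\}$ (posterior mean and variance of $f'$ under the unconstrained prior $f\sim \mathrm{GP}(0,\sigma^2(n\lambda)^{-1}K)$ in the model $y_i=f(X_i)+\epsilon_i$, $\epsilon_i\sim N(0,\sigma^2)$ i.i.d.). Constrained prior: given $t\in[0,1]$, $f\sim\mathrm{GP}(0,k_t)$ with $k_t(x,x')=\sigma^2(n\lambda)^{-1}\{K(x,x')-K_{01}(x,t)K_{11}(t,t)^{-1}K_{10}(t,x')\}$ (the GP conditioned on $f'(t)=0$), and $t\sim\pi$. Integrating out $f$ gives $\mathbf y\mid X,t\sim N(0,\Sigma_t)$ with $\Sigma_t=\sigma^2(n\lambda)^{-1}\{K(X,X)-K_{01}(X,t)K_{11}(t,t)^{-1}K_{10}(t,X)\}+\sigma^2 I_n$; the marginal likelihood $\ell(t)$ is the $N(0,\Sigma_t)$ density evaluated at $\mathbf y$, and $\pi_n(t\mid X,\mathbf y)\propto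 \ell(t)\pi(t)$. *)

From HB Require Import structures.
From mathcomp Require Import all_boot all_order all_algebra.
From mathcomp Require Import all_classical all_reals all_analysis.
Set Implicit Arguments. Unset Strict Implicit. Unset Printing Implicit Defensive.
Import Order.TTheory GRing.Theory Num.Theory.
Import numFieldNormedType.Exports.
Local Open Scope classical_set_scope.
Local Open Scope ring_scope.

Section GPDefs.
Variable R : realType.

Definition K10 (K : R -> R -> R) (x x' : R) : R := derive1 (fun u => K u x') x.
Definition K01 (K : R -> R -> R) (x x' : R) : R := derive1 (fun v => K x v) x'.
Definition K11 (K : R -> R -> R) (x x' : R) : R := derive1 (fun v => K10 K x v) x'.
Definition K20 (K : R -> R -> R) (x x' : R) : R := derive1 (fun u => K10 K u x') x.
Definition K02 (K : R -> R -> R) (x x' : R) : R := derive1 (fun v => K01 K x v) x'.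

Definition unit_sq : set (R * R) := `[0, 1] `*` `[0, 1].

Definition C2_on_square (K : R -> R -> R) : Prop :=
  (forall x x', x \in `[0, 1] -> x' \in `[0, 1] ->
     [/\ derivable (fun u => K u x') x 1, derivable (fun v => K x v) x' 1,
         derivable (fun u => K10 K u x') x 1 & derivable (fun v => K10 K x v) x' 1]
     /\ derivable (fun u => K01 K u x') x 1 /\ derivable (fun v => K01 K x v) x' 1)
  /\ {within unit_sq, continuous (fun p => K p.1 p.2)}
  /\ {within unit_sq, continuous (fun p => K10 K p.1 p.2)}
  /\ {within unit_sq, continuous (fun p => K01 K p.1 p.2)}
  /\ {within unit_sq, continuous (fun p => K20 K p.1 p.2)}
  /\ {within unit_sq, continuous (fun p => K11 K p.1 p.2)}
  /\ {within unit_sq, continuous (fun p => K02 K p.1 p.2)}.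

Definition kernel_symmetric (K : R -> R -> R) : Prop :=
  forall x x', x \in `[0, 1] -> x' \in `[0, 1] -> K x x' = K x' x.

(* positive definite kernel (Aronszajn/Mercer sense): every Gram matrix on
   points of [0,1] is positive semi-definite. *)
Definition kernel_posdef (K : R -> R -> R) : Prop :=
  forall (m : nat) (p : 'I_m -> R) (c : 'rV[R]_m),
    (forall i, p i \in `[0, 1]) ->
    0 <= (c *m (\matrix_(i, j) K (p i) (p j)) *m c^T) 0 0.

Variable n : nat.

Definition KXX (K : R -> R -> R) (X : 'I_n -> R) : 'M[R]_n :=
  \matrix_(i, j) K (X i) (X j).
Definition K10xX (K : R -> R -> R) (X : 'I_n -> R) (x : R) : 'rV[R]_n :=
  \row_j K10 K x (X j).
Definition K01Xx (K : R -> R -> R) (X : 'I_n -> R) (x : R) : 'cV[R]_n :=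
  (K10xX K X x)^T.

Definition Mreg (K : R -> R -> R) (X : 'I_n -> R) (lam : R) : 'M[R]_n :=
  KXX K X + (n%:R * lam)%:M.

Definition mu_hat (K : R -> R -> R) (X : 'I_n -> R) (y : 'cV[R]_n) (lam x : R) : R :=
  (K10xX K X x *m invmx (Mreg K X lam) *m y) 0 0.

Definition sigma2_hat (K : R -> R -> R) (X : 'I_n -> R) (sig lam x : R) : R :=
  sig ^+ 2 / (n%:R * lam) *
  (K11 K x x - (K10xX K X x *m invmx (Mreg K X lam) *m K01Xx K X x) 0 0).

Definition Sigma_t (K : R -> R -> R) (X : 'I_n -> R) (sig lam t : R) : 'M[R]_n :=
  (sig ^+ 2 / (n%:R * lam)) *:
    (KXX K X - (K11 K t t)^-1 *: (K01Xx K X t *m K10xX K X t))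
  + (sig ^+ 2) *: 1%:M.

Definition gauss_density (S : 'M[R]_n) (y : 'cV[R]_n) : R :=
  (Num.sqrt ((2 * pi) ^+ n * \det S))^-1 *
  expR (- ((y^T *m invmx S *m y) 0 0) / 2).

Definition marg_lik (K : R -> R -> R) (X : 'I_n -> R) (y : 'cV[R]_n) (sig lam t : R) : R :=
  gauss_density (Sigma_t K X sig lam t) y.

Definition post_density (K : R -> R -> R) (X : 'I_n -> R) (y : 'cV[R]_n)
  (sig lam : R) (prior : R -> R) (t : R) : R :=
  marg_lik K X y sig lam t * prior t /
  (\int[@lebesgue_measure R]_(s in `[0, 1]) (marg_lik K X y sig lam s * prior s)).

End GPDefs.

(** Conditioning the prior on [f'(t) = 0] turns the marginal covariance
    [a (K(X,X) + n lambda I_n)], with [a = sigma^2 / (n lambda)], into the rank-one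
    downdate [Sigma_t = a (M - K_11(t,t)^-1 k^T k)], where [M = K(X,X) + n lambda I_n]
    and [k = K_10(t,X)].  By the matrix determinant lemma [det Sigma_t] is
    [a^n det M] times [sigma2_hat(t) / (a K_11(t,t))], and by the Sherman-Morrison
    formula [y^T Sigma_t^-1 y] is [y^T M^-1 y / a] plus [mu_hat(t)^2 / sigma2_hat(t)].
    The remaining factors of the Gaussian density do not depend on [t]. *)

From HB Require Import structures.
From mathcomp Require Import all_boot all_order all_algebra.
From mathcomp Require Import all_classical all_reals all_analysis.
From mathcomp Require Import ring lra.
Import Order.TTheory GRing.Theory Num.Theory.
Import numFieldNormedType.Exports.
Local Open Scope classical_set_scope.
Local Open Scope ring_scope.

Section RankOneUpdate.
Variables (F : comUnitRingType) (m : nat).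
Implicit Types (M : 'M[F]_m) (u : 'cV[F]_m) (v : 'rV[F]_m).

Lemma mulmx_rank1_mx11 (a : 'rV[F]_m) u v (b : 'cV[F]_m) :
  (a *m (u *m v) *m b) 0 0 = (a *m u) 0 0 * (v *m b) 0 0.
Proof. by rewrite !mulmxA -(mulmxA (a *m u)) {1}[a *m u]mx11_scalar mul_scalar_mx mxE. Qed.

Lemma det_1_sub_mul u v : \det (1%:M - u *m v) = 1 - (v *m u) 0 0.
Proof.
have eL : block_mx (1%:M - u *m v) u 0 1%:M *m block_mx 1%:M 0 v 1%:M
          = block_mx 1%:M u v (1%:M : 'M[F]_1).
  by rewrite mulmx_block !mulmx1 !mulmx0 ?mul0mx !mul1mx subrK ?add0r ?addr0.
have eR : block_mx 1%:M 0 v 1%:M *m block_mx 1%:M u 0 (1%:M - v *m u)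
          = block_mx 1%:M u v (1%:M : 'M[F]_1).
  by rewrite mulmx_block !mulmx1 !mulmx0 ?mul0mx !mul1mx ?addr0 ?add0r (addrC (v *m u)) subrK.
have := congr1 determinant (etrans eL (esym eR)).
by rewrite !det_mulmx !det_ublock !det_lblock !det1 !mulr1 !mul1r det_mx11 !mxE.
Qed.

Lemma det_sub_mul M u v : M \in unitmx ->
  \det (M - u *m v) = \det M * (1 - (v *m invmx M *m u) 0 0).
Proof.
move=> Mu; have -> : M - u *m v = M *m (1%:M - (invmx M *m u) *m v).
  by rewrite mulmxBr mulmx1 !mulmxA mulmxV ?mul1mx.
by rewrite det_mulmx det_1_sub_mul mulmxA.
Qed.

Lemma invmx_sub_mul M u v (s := 1 - (v *m invmx M *m u) 0 0) :
  M \in unitmx -> s \is a GRing.unit ->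
  invmx (M - u *m v) = invmx M + s^-1 *: (invmx M *m u *m v *m invmx M).
Proof.
move=> Mu su; set N := invmx M; set P := N + _.
have uvN_sq : u *m v *m (N *m u *m v *m N) = (1 - s) *: (u *m v *m N).
  rewrite /s opprB addrC subrK.
  have -> : u *m v *m (N *m u *m v *m N) = u *m (v *m N *m u) *m (v *m N).
    by rewrite !mulmxA.
  by rewrite {1}[v *m N *m u]mx11_scalar mul_mx_scalar -scalemxAl mulmxA.
have MP : (M - u *m v) *m P = 1%:M.
  rewrite mulmxBl !mulmxDr mulmxV // -!scalemxAr uvN_sq !mulmxA mulmxV // mul1mx.
  rewrite scalerA mulrBr mulr1 mulVr // scalerBl scale1r.
  by rewrite (addrC (u *m v *m N)) subrK addrK.
have Pu := (mulmx1_unit MP).1.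
by rewrite -[LHS]mulmx1 -MP mulmxA mulVmx ?mul1mx.
Qed.

End RankOneUpdate.

Section PositiveDefinite.
Variables (R : realFieldType) (m : nat).
Implicit Types (A : 'M[R]_m) (u : 'rV[R]_m).

Lemma mulmx_tr_sumE u : (u *m u^T) 0 0 = \sum_j u 0 j ^+ 2.
Proof. by rewrite mxE; apply: eq_bigr => j _; rewrite mxE expr2. Qed.

Lemma mulmx_tr_ge0 u : 0 <= (u *m u^T) 0 0.
Proof. by rewrite mulmx_tr_sumE sumr_ge0 // => j _; rewrite sqr_ge0. Qed.

Lemma mulmx_tr_eq0 u : ((u *m u^T) 0 0 == 0) = (u == 0).
Proof.
apply/idP/eqP => [|->]; last by rewrite mul0mx mxE.
rewrite mulmx_tr_sumE psumr_eq0 => [/allP u0|j _]; last exact: sqr_ge0.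
apply/matrixP => i j; rewrite (ord1 i) mxE.
by apply/eqP; rewrite -sqrf_eq0; apply: (implyP (u0 j (mem_index_enum j))).
Qed.

Lemma quad_add_scalar A u c :
  (u *m (A + c%:M) *m u^T) 0 0 = (u *m A *m u^T) 0 0 + c * (u *m u^T) 0 0.
Proof. by rewrite mulmxDr mulmxDl mul_mx_scalar -scalemxAl !mxE. Qed.

Definition psdmx A := forall u, 0 <= (u *m A *m u^T) 0 0.

Lemma psdmx_add_scalar A c : psdmx A -> 0 <= c -> psdmx (A + c%:M).
Proof. by move=> A_psd c_ge0 u; rewrite quad_add_scalar addr_ge0 ?mulr_ge0 ?mulmx_tr_ge0. Qed.

Lemma psdmx_add_scalar_unitmx A c : psdmx A -> 0 < c -> A + c%:M \in unitmx.
Proof.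
move=> A_psd c_gt0; rewrite unitmxE unitfE; apply/negP => /det0P [u u0 uA0].
have : (u *m (A + c%:M) *m u^T) 0 0 == 0 by rewrite uA0 mul0mx mxE.
rewrite quad_add_scalar paddr_eq0 ?mulr_ge0 ?mulmx_tr_ge0 ?(ltW c_gt0) //.
by rewrite mulf_eq0 (gt_eqF c_gt0) mulmx_tr_eq0 (negPf u0) andbF.
Qed.

End PositiveDefinite.

Arguments psdmx {R m} A.

Section MarginalLikelihood.
Variables (R : realType) (n : nat) (sig lam : R) (X : 'I_n -> R) (K : R -> R -> R).
Hypotheses (n_gt0 : (0 < n)%N) (sig_gt0 : 0 < sig) (lam_gt0 : 0 < lam).
Hypotheses (X01 : forall i, X i \in `[0, 1]) (K_sym : kernel_symmetric K) (K_psd : kernel_posdef K).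

Local Notation M := (Mreg K X lam).
Local Notation N := (invmx (Mreg K X lam)).
Local Notation scale := (sig ^+ 2 / (n%:R * lam)).

Lemma nlam_gt0 : 0 < n%:R * lam.
Proof. by rewrite mulr_gt0 ?ltr0n. Qed.

Lemma scale_gt0 : 0 < scale.
Proof. by rewrite divr_gt0 ?exprn_gt0 ?nlam_gt0. Qed.

Lemma psdmx_KXX : psdmx (KXX K X).
Proof. by move=> u; apply: K_psd. Qed.

Lemma psdmx_Mreg : psdmx M.
Proof. exact: psdmx_add_scalar psdmx_KXX (ltW nlam_gt0). Qed.

Lemma Mreg_unitmx : M \in unitmx.
Proof. exact: psdmx_add_scalar_unitmx psdmx_KXX nlam_gt0. Qed.

Lemma trmx_Mreg : M^T = M.
Proof.
rewrite /Mreg raddfD /= tr_scalar_mx; congr (_ + _).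
by apply/matrixP => i j; rewrite !mxE K_sym.
Qed.

Lemma trmx_invmx_Mreg : N^T = N.
Proof. by rewrite trmx_inv trmx_Mreg. Qed.

Lemma quad_invmx_Mreg_ge0 (w : 'rV_n) : 0 <= (w *m N *m w^T) 0 0.
Proof.
have -> : w *m N *m w^T = (w *m N) *m M *m (w *m N)^T.
  by rewrite trmx_mul trmx_invmx_Mreg -!mulmxA (mulmxA N M) mulVmx ?Mreg_unitmx ?mul1mx.
exact: psdmx_Mreg.
Qed.

Definition marg_lik_const (y : 'cV[R]_n) : R :=
  (Num.sqrt ((2 * pi) ^+ n * scale ^+ n * \det M / scale))^-1 *
  expR (- (scale^-1 * (y^T *m N *m y) 0 0) / 2).

Section AtPoint.
Variable t : R.
Local Notation k := (K10xX K X t).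
Local Notation kap := (K11 K t t).
Local Notation q := ((k *m N *m k^T) 0 0).
Local Notation s2 := (sigma2_hat K X sig lam t).

Lemma Sigma_tE :
  Sigma_t K X sig lam t = scale *: (M - (kap^-1 *: k^T) *m k).
Proof.
rewrite /Sigma_t /Mreg /K01Xx -scalemxAl !scalerDr !scalerN !scale_scalar_mx mulr1.
by rewrite divfK ?gt_eqF ?nlam_gt0 // addrAC.
Qed.

Lemma det_Sigma_t :
  \det (Sigma_t K X sig lam t) = scale ^+ n * \det M * (1 - kap^-1 * q).
Proof.
by rewrite Sigma_tE detZ det_sub_mul ?Mreg_unitmx // -scalemxAr mxE mulrA.
Qed.

Hypothesis sigma2_hat_gt0 : 0 < s2.

Lemma K11_sub_quad_gt0 : 0 < kap - q.
Proof. by rewrite -(pmulr_rgt0 _ scale_gt0). Qed.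

Lemma K11_gt0 : 0 < kap.
Proof. by have := K11_sub_quad_gt0; have := quad_invmx_Mreg_ge0 k; lra. Qed.

Lemma quad_invmx_Sigma_t (y : 'cV_n) :
  (y^T *m invmx (Sigma_t K X sig lam t) *m y) 0 0
  = scale^-1 * ((y^T *m N *m y) 0 0 + mu_hat K X y lam t ^+ 2 / (kap - q)).
Proof.
rewrite -[mu_hat _ _ _ _ _]/((k *m N *m y) 0 0).
have kq_gt0 := K11_sub_quad_gt0; have kap_gt0 := K11_gt0.
set s := 1 - (k *m N *m (kap^-1 *: k^T)) 0 0.
have sE : s = (kap - q) / kap.
  by rewrite /s -scalemxAr mxE; field; rewrite gt_eqF.
have s_unit : s \is a GRing.unit.
  by rewrite unitfE sE mulf_neq0 ?invr_eq0 ?gt_eqF.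
have B_unit : M - (kap^-1 *: k^T) *m k \in unitmx.
  by rewrite unitmxE det_sub_mul ?Mreg_unitmx // unitrM -unitmxE Mreg_unitmx.
rewrite Sigma_tE invmxZ ?unitmxZ ?unitfE ?gt_eqF ?scale_gt0 //.
rewrite invmx_sub_mul ?Mreg_unitmx // -/s.
rewrite -scalemxAr -scalemxAl mxE mulmxDr mulmxDl mxE; congr (_ * (_ + _)).
set u := kap^-1 *: k^T.
have -> : y^T *m (s^-1 *: (N *m u *m k *m N)) *m y
          = s^-1 *: ((y^T *m N) *m (u *m k) *m (N *m y)).
  by rewrite -scalemxAr -scalemxAl !mulmxA.
rewrite mxE mulmx_rank1_mx11 -scalemxAr mxE !mulmxA.
have -> : y^T *m N *m k^T = (k *m N *m y)^T by rewrite !trmx_mul trmx_invmx_Mreg mulmxA.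
by rewrite mxE sE; field; rewrite !gt_eqF.
Qed.

Lemma marg_likE (y : 'cV_n) :
  marg_lik K X y sig lam t =
  marg_lik_const y * ((Num.sqrt (s2 / kap))^-1 *
                      expR (- (mu_hat K X y lam t ^+ 2) / (2 * s2))).
Proof.
have kq_gt0 := K11_sub_quad_gt0; have kap_gt0 := K11_gt0; have a_gt0 := scale_gt0.
rewrite /marg_lik /gauss_density quad_invmx_Sigma_t det_Sigma_t /marg_lik_const.
set a := scale in a_gt0 *.
have s2E : s2 = a * (kap - q) by [].
have -> : (2 * pi) ^+ n * (a ^+ n * \det M * (1 - kap^-1 * q))
          = s2 / kap * ((2 * pi) ^+ n * a ^+ n * \det M / a).
  by rewrite s2E; field; rewrite !gt_eqF.
rewrite sqrtrM ?divr_ge0 ?ltW // invfM.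
set p := (y^T *m N *m y) 0 0; set mu := mu_hat K X y lam t.
have -> : - (a^-1 * (p + mu ^+ 2 / (kap - q))) / 2
          = - (a^-1 * p) / 2 + - (mu ^+ 2) / (2 * s2).
  by rewrite s2E; field; rewrite !gt_eqF.
by rewrite expRD; ring.
Qed.

End AtPoint.
End MarginalLikelihood.

Arguments marg_lik_const {R n} sig lam X K y.
Arguments marg_likE {R n sig lam X K}.

Theorem proposition1 (R : realType) (n : nat) (sig lam : R)
  (X : 'I_n -> R) (y : 'cV[R]_n) (K : R -> R -> R) (prior : R -> R) :
  (0 < n)%N -> 0 < sig -> 0 < lam ->
  (forall i, X i \in `[0, 1]) ->
  {within @unit_sq R, continuous (fun p => K p.1 p.2)} ->
  kernel_symmetric K -> kernel_posdef K -> C2_on_square K ->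
  (forall x, x \in `[0, 1] -> 0 < sigma2_hat K X sig lam x) ->
  (* prior density on [0,1] *)
  measurable_fun (`[0, 1] : set R) prior ->
  (forall t, t \in `[0, 1] -> 0 <= prior t) ->
  \int[@lebesgue_measure R]_(t in `[0, 1]) prior t = 1 ->
  (exists C : R, forall t, t \in `[0, 1] ->
     marg_lik K X y sig lam t =
     C * ((Num.sqrt (sigma2_hat K X sig lam t / K11 K t t))^-1 *
          expR (- (mu_hat K X y lam t ^+ 2) / (2 * sigma2_hat K X sig lam t))))
  /\
  (exists C' : R, forall t, t \in `[0, 1] ->
     post_density K X y sig lam prior t =
     C' * ((Num.sqrt (sigma2_hat K X sig lam t / K11 K t t))^-1 *
           expR (- (mu_hat K X y lam t ^+ 2) / (2 * sigma2_hat K X sig lam t))) * prior t).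
Proof.
move=> n_gt0 sig_gt0 lam_gt0 X01 _ K_sym K_psd _ s2_gt0 _ _ _.
have likE t (t01 : t \in `[0, 1]) :=
  marg_likE n_gt0 sig_gt0 lam_gt0 X01 K_sym K_psd t (s2_gt0 t t01) y.
split; first by exists (marg_lik_const sig lam X K y).
exists (marg_lik_const sig lam X K y /
        \int[@lebesgue_measure R]_(s in `[0, 1]) (marg_lik K X y sig lam s * prior s)).
by move=> t t01; rewrite /post_density likE //; ring.
Qed.
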